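(* Let $h=u+v+u^{-1}+v^{-1}+u^{-1}v^{-1}\in A=\mathbb C\langle u^{\pm1},v^{\pm1}\rangle$ and consider the derivation $\frac{d}{dt}x=\{h,x\}_K$ of $A$ (the Kontsevich flow). For every integer $k>0$, $\pi(h^k)$ is an integral of this flow: $\frac{d}{dt}h^k=\{h,h^k\}_K\in[A,A]$, i.e. $\pi\big(\tfrac{d}{dt}h^k\big)=0$.
   Context: $A$ is the group algebra over $\mathbb C$ of the free group on $u,v$; $[A,A]$ is the linear span of all $ab-ba$; $\pi:A\to A/[A,A]$ is the projection. $\mu(a\otimes b)=ab$; $A\otimes A$ has componentwise multiplication. The double bracket $\llbracket\cdot\rrbracket_K:A\otimes A\to A\otimes A$ is the linear map with $\llbracket u\otimes v\rrbracket_K=-vu\otimes1$, $\llbracket v\otimes u\rrbracket_K=uv\otimes1$, $\llbracket u\otimes u\rrbracket_K=\llbracket v\otimes v\rrbracket_K=0$, extended (also to inverse letters) by the Leibniz rules $\llbracket a\otimes bc\rrbracket_K=\llbracket a\otimes b\rrbracket_K(1\otimes c)+(b\otimes1)\llbracket a\otimes c\rrbracket_K$ and $\llbracket ab\otimes c\rrbracket_K=\llbracket a\otimes c\rrbracket_K(b\otimes1)+(1\otimes a)\llbracket b\otimes c\rrbracket_K$. The bracket is $\{a,b\}_K=\mu(\llbracket a\otimes b\rrbracket_K)$; it satisfies the Leibniz rule in the second argument, so $\{h,\cdot\}_K$ is a derivation of $A$. *)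

From HB Require Import structures.
From mathcomp Require Import all_boot all_algebra.
From mathcomp Require Import complex Rstruct.
Set Implicit Arguments. Unset Strict Implicit. Unset Printing Implicit Defensive.
Import GRing.Theory.
Local Open Scope ring_scope.

Definition CC : comNzRingType := complex Rdefinitions.R.

(* a letter is (g, e): g = false for u, true for v; e = true means inverse *)
Definition letter := (bool * bool)%type.
Definition linv (x : letter) : letter := (x.1, ~~ x.2).

Fixpoint reducedb (w : seq letter) : bool :=
  match w with
  | x :: ((y :: _) as t) => (y != linv x) && reducedb t
  | _ => true
  end.

Definition cons_red (x : letter) (w : seq letter) : seq letter :=
  match w with
  | y :: t => if y == linv x then t else x :: w
  | [::] => [:: x]
  end.

Definition reduce (w : seq letter) : seq letter := foldr cons_red [::] w.

Lemma reduced_cons_red x w : reducedb w -> reducedb (cons_red x w).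
Proof.
case: w => [|y t] //=; case: ifP => [_|/negbT ne] Hr.
  by case: t Hr => [|z t'] //= /andP[].
by rewrite /= ne Hr.
Qed.

Lemma reduced_reduce w : reducedb (reduce w).
Proof. by elim: w => [|x w IH] //=; apply: reduced_cons_red. Qed.

Record FG := MkFG { fgw : seq letter; fgP : reducedb fgw }.
HB.instance Definition _ := [isSub for fgw].
HB.instance Definition _ := [Equality of FG by <:].

Definition FGred (w : seq letter) : FG := MkFG (reduced_reduce w).
Definition fone : FG := FGred [::].
Definition fmul (g h : FG) : FG := FGred (fgw g ++ fgw h).
Definition finv (g : FG) : FG := FGred (rev (map linv (fgw g))).
Definition fu : FG := FGred [:: (false, false)].
Definition fv : FG := FGred [:: (true, false)].

(** * The group algebra A = C[F]
    An element is represented by a finite formal linear combination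
    (a list of (coefficient, group element)); two representations denote
    the same element of A iff all their coefficients agree (eqA). *)
Definition A := seq (CC * FG).
Definition coefA (x : A) (g : FG) : CC := \sum_(p <- x | p.2 == g) p.1.
Definition eqA (x y : A) : Prop := forall g, coefA x g = coefA y g.

Definition oneA : A := [:: (1, fone)].
Definition ofG (g : FG) : A := [:: (1, g)].
Definition addA (x y : A) : A := x ++ y.
Definition scaleA (c : CC) (x : A) : A := [seq (c * p.1, p.2) | p <- x].
Definition subA (x y : A) : A := x ++ scaleA (-1) y.
Definition mulA (x y : A) : A := [seq (p.1 * q.1, fmul p.2 q.2) | p <- x, q <- y].
Definition powA (x : A) (k : nat) : A := iter k (mulA x) oneA.

(** * A (x) A = C[F x F], with componentwise multiplication *)
Definition AA := seq (CC * (FG * FG)).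
Definition coefAA (t : AA) (g : FG * FG) : CC := \sum_(p <- t | p.2 == g) p.1.
Definition eqAA (s t : AA) : Prop := forall g, coefAA s g = coefAA t g.

Definition tens (g h : FG) : AA := [:: (1, (g, h))].
Definition zeroAA : AA := [::].
Definition addAA (s t : AA) : AA := s ++ t.
Definition scaleAA (c : CC) (t : AA) : AA := [seq (c * p.1, p.2) | p <- t].
Definition mulAA (s t : AA) : AA :=
  [seq (p.1 * q.1, (fmul p.2.1 q.2.1, fmul p.2.2 q.2.2)) | p <- s, q <- t].

Definition muAA (t : AA) : A := [seq (p.1, fmul p.2.1 p.2.2) | p <- t].

(** * The Kontsevich double bracket.
    A linear map A (x) A -> A (x) A is determined by its values D g h on the
    basis g (x) h (g, h in F).  The defining properties: *)
Definition is_Kontsevich_dbr (D : FG -> FG -> AA) : Prop :=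
  [/\ eqAA (D fu fv) (scaleAA (-1) (tens (fmul fv fu) fone)),
      eqAA (D fv fu) (tens (fmul fu fv) fone),
      eqAA (D fu fu) zeroAA,
      eqAA (D fv fv) zeroAA
    &
      (forall a b c : FG, eqAA (D a (fmul b c))
          (addAA (mulAA (D a b) (tens fone c)) (mulAA (tens b fone) (D a c))))
      /\
      (forall a b c : FG, eqAA (D (fmul a b) c)
          (addAA (mulAA (D a c) (tens b fone)) (mulAA (tens fone a) (D b c))))].

(* the bilinear extension of [[.]] to A x A, followed by mu: {x, y}_K *)
Definition brK (D : FG -> FG -> AA) (x y : A) : A :=
  flatten [seq scaleA (p.1 * q.1) (muAA (D p.2 q.2)) | p <- x, q <- y].

(** * [A, A] : the linear span of all ab - ba;  x \in [A,A] iff pi x = 0 *)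
Definition in_commA (x : A) : Prop :=
  exists s : seq (CC * A * A),
    eqA x (flatten [seq scaleA t.1.1 (subA (mulA t.1.2 t.2) (mulA t.2 t.1.2)) | t <- s]).

Definition hK : A :=
  [:: (1, fu); (1, fv); (1, finv fu); (1, finv fv); (1, fmul (finv fu) (finv fv))].

(** The double bracket is determined by its values on the generators through
    the Leibniz rules, so [{h, h}_K] is a finite computation; it turns out to be
    the commutator [h s - s h] with [s = v + u^-1].  Since [{h, .}_K] is a
    derivation, [{h, h^(k+1)} = {h, h} h^k + h {h, h^k}], and induction on [k]
    gives [{h, h^k} = h^k s - s h^k], a single commutator. *)
From mathcomp Require Import all_boot all_algebra.
Set Implicit Arguments. Unset Strict Implicit. Unset Printing Implicit Defensive.
Import GRing.Theory.
Local Open Scope ring_scope.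

Lemma linvK : involutive linv.
Proof. by case=> a b; rewrite /linv /= negbK. Qed.

Lemma reduce_reduced w : reducedb w -> reduce w = w.
Proof.
elim: w => [|x w IH] //= Hr.
have Hw : reducedb w by case: w Hr {IH} => [|y t] //= /andP[].
rewrite IH //; case: w Hr {IH Hw} => [|y t] //= /andP[ne _].
by rewrite (negbTE ne).
Qed.

Lemma reduced_foldr r a : reducedb r -> reducedb (foldr cons_red r a).
Proof. by move=> Hr; elim: a => [|x a IH] //=; apply: reduced_cons_red. Qed.

Lemma cons_redK x s : reducedb s -> cons_red x (cons_red (linv x) s) = s.
Proof.
case: s => [|z s] /=; first by rewrite eqxx.
case: ifP => [/eqP ez|nz] Hr; last by rewrite /= eqxx.
have -> : z = x by rewrite ez linvK.
case: s Hr => [|w s] //= /andP[ne _].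
by rewrite ez linvK in ne; rewrite (negbTE ne).
Qed.

Lemma foldr_cons_red r x t : reducedb r -> reducedb t ->
  foldr cons_red r (cons_red x t) = cons_red x (foldr cons_red r t).
Proof.
move=> Hr; case: t => [|y t] //= Ht.
case: ifP => [/eqP ey|_] //=.
have Ht' : reducedb t by case: t Ht => [|z t] //= /andP[].
by rewrite ey cons_redK // reduced_foldr.
Qed.

Lemma reduce_cat a b : reduce (a ++ b) = foldr cons_red (reduce b) a.
Proof. exact: foldr_cat. Qed.

Lemma reduce_catl a b : reduce (reduce a ++ b) = reduce (a ++ b).
Proof.
rewrite !reduce_cat; have Hr := reduced_reduce b.
by elim: a => [|x a IH] //=; rewrite foldr_cons_red ?reduced_foldr // IH.
Qed.

Lemma reduce_catr a b : reduce (a ++ reduce b) = reduce (a ++ b).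
Proof. by rewrite !reduce_cat reduce_reduced // reduced_reduce. Qed.

Lemma FGred_cat a b : FGred (a ++ b) = fmul (FGred a) (FGred b).
Proof. by apply: val_inj; rewrite /= reduce_catl reduce_catr. Qed.

Lemma fmulA : associative fmul.
Proof. by move=> g h k; apply: val_inj; rewrite /= reduce_catl reduce_catr catA. Qed.

Lemma fmul1g : left_id fone fmul.
Proof. by move=> g; apply: val_inj; rewrite /= reduce_reduced // fgP. Qed.

Lemma fmulg1 : right_id fone fmul.
Proof. by move=> g; apply: val_inj; rewrite /= cats0 reduce_reduced // fgP. Qed.

Definition fletter (x : letter) : FG := FGred [:: x].

Lemma FGred_cons x w : FGred (x :: w) = fmul (fletter x) (FGred w).
Proof. exact: FGred_cat [:: x] w. Qed.

Lemma fletter_linv x : fmul (fletter x) (fletter (linv x)) = fone.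
Proof. by apply: val_inj; rewrite /= eqxx. Qed.

(* Elements of [A] and [A (x) A] are formal combinations, equal when their
   coefficients agree; we compare them through their pairings [ev phi] with all
   weight functions [phi] ([ev_eq], [eqA_ev]). *)
Section Combinations.
Variable T : eqType.

Definition coefL (x : seq (CC * T)) (g : T) : CC := \sum_(p <- x | p.2 == g) p.1.
Definition ev (phi : T -> CC) (x : seq (CC * T)) : CC := \sum_(p <- x) p.1 * phi p.2.

Lemma coefL_ev x g : coefL x g = ev (fun t => (t == g)%:R) x.
Proof.
rewrite /coefL /ev big_mkcond; apply: eq_bigr => p _.
by case: eqP => _; rewrite ?mulr1 ?mulr0.
Qed.

Lemma ev_support r x phi : uniq r -> {subset map snd x <= r} ->
  ev phi x = \sum_(t <- r) coefL x t * phi t.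
Proof.
move=> ur sub; under eq_bigr => t _ do rewrite coefL_ev /ev big_distrl.
rewrite exchange_big /ev; apply: eq_big_seq => p px.
rewrite (big_rem p.2) ?sub ?map_f // eqxx mulr1 big1_seq; first exact/esym/addr0.
move=> t /andP[_ tr].
have /negbTE-> : p.2 != t by apply: contraTneq tr => <-; rewrite mem_rem_uniqF.
by rewrite /= mulr0 mul0r.
Qed.

Lemma ev_eq x y phi : (forall g, coefL x g = coefL y g) -> ev phi x = ev phi y.
Proof.
move=> e; set r := undup (map snd x ++ map snd y).
rewrite (@ev_support r x) ?(@ev_support r y) ?undup_uniq //.
- by apply: eq_bigr => t _; rewrite e.
- by move=> t ty; rewrite mem_undup mem_cat ty orbT.
- by move=> t tx; rewrite mem_undup mem_cat tx.
Qed.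

Lemma eq_ev phi psi x : phi =1 psi -> ev phi x = ev psi x.
Proof. by move=> e; apply: eq_bigr => p _; rewrite e. Qed.

Lemma ev_nil phi : ev phi [::] = 0.
Proof. exact: big_nil. Qed.

Lemma ev_cons phi p x : ev phi (p :: x) = p.1 * phi p.2 + ev phi x.
Proof. exact: big_cons. Qed.

Lemma ev_cat phi x y : ev phi (x ++ y) = ev phi x + ev phi y.
Proof. exact: big_cat. Qed.

Lemma ev_scale phi c x : ev phi [seq (c * p.1, p.2) | p <- x] = c * ev phi x.
Proof. by rewrite /ev big_map big_distrr; apply: eq_bigr => p _; exact/esym/mulrA. Qed.

Lemma ev_add phi psi x : ev (fun t => phi t + psi t) x = ev phi x + ev psi x.
Proof. by rewrite /ev -big_split; apply: eq_bigr => p _; rewrite mulrDr. Qed.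

Lemma ev_sub phi psi x : ev (fun t => phi t - psi t) x = ev phi x - ev psi x.
Proof. by rewrite /ev -sumrB; apply: eq_bigr => p _; exact: mulrBr. Qed.

End Combinations.

Lemma ev_map (T U : eqType) phi (f : T -> U) x :
  ev phi [seq (p.1, f p.2) | p <- x] = ev (phi \o f) x.
Proof. exact: big_map. Qed.

Lemma ev_allpairs (T1 T2 U : eqType) phi (f : T1 -> T2 -> U) x y :
  ev phi [seq (p.1 * q.1, f p.2 q.2) | p <- x, q <- y] =
  ev (fun a => ev (fun b => phi (f a b)) y) x.
Proof.
rewrite /ev big_allpairs_dep; apply: eq_bigr => p _.
by rewrite big_distrr; apply: eq_bigr => q _; rewrite /= mulrA.
Qed.

Lemma ev_swap (T1 T2 : eqType) (F : T1 -> T2 -> CC) x y :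
  ev (fun a => ev (F a) y) x = ev (fun b => ev (F^~ b) x) y.
Proof.
rewrite /ev; under eq_bigr => p _ do rewrite big_distrr.
rewrite exchange_big; apply: eq_bigr => q _; rewrite big_distrr.
by apply: eq_bigr => p _; exact: mulrCA.
Qed.

(* Equality in [CC] is not decidable, so the brackets of the monomials of [h]
   are computed as integer combinations and compared by evaluation. *)
Section IntegerCombinations.
Variable T : eqType.

Definition ofZ (l : seq (int * T)) : seq (CC * T) := [seq (p.1%:~R, p.2) | p <- l].

Lemma ev_ofZ phi l : ev phi (ofZ l) = \sum_(p <- l) p.1%:~R * phi p.2.
Proof. exact: big_map. Qed.

Lemma ev_ofZ_cat phi l1 l2 : ev phi (ofZ (l1 ++ l2)) = ev phi (ofZ l1) + ev phi (ofZ l2).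
Proof. by rewrite /ofZ map_cat ev_cat. Qed.

Lemma ev_ofZ_flatten phi ls : ev phi (ofZ (flatten ls)) = \sum_(l <- ls) ev phi (ofZ l).
Proof. by rewrite ev_ofZ big_flatten; apply: eq_bigr => l _; rewrite ev_ofZ. Qed.

Lemma ev_ofZ_allpairs (S1 S2 : Type) phi c (f : S1 -> S2 -> T) r1 r2 :
  ev phi (ofZ [seq (c, f i j) | i <- r1, j <- r2]) =
  \sum_(i <- r1) \sum_(j <- r2) c%:~R * phi (f i j).
Proof. by rewrite ev_ofZ big_allpairs_dep. Qed.

Definition coefZ (l : seq (int * T)) (g : T) : int :=
  foldr (fun p acc => if p.2 == g then p.1 + acc else acc) 0 l.

Definition eqZb (l1 l2 : seq (int * T)) : bool :=
  all (fun t => coefZ l1 t == coefZ l2 t) (map snd l1 ++ map snd l2).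

Lemma coefL_ofZ l g : coefL (ofZ l) g = (coefZ l g)%:~R.
Proof.
elim: l => [|p l IH]; first exact: big_nil.
rewrite /coefL big_cons -/(coefL _ g) IH /=.
by case: ifP => _; rewrite ?rmorphD.
Qed.

Lemma coefZ_out l g : g \notin map snd l -> coefZ l g = 0.
Proof.
elim: l => [|p l IH] //=; rewrite inE negb_or => /andP[ne /IH ->].
by rewrite eq_sym (negbTE ne).
Qed.

Lemma eqZbP l1 l2 : eqZb l1 l2 -> forall phi, ev phi (ofZ l1) = ev phi (ofZ l2).
Proof.
move=> /allP H phi; apply: ev_eq => g; rewrite !coefL_ofZ.
have [/H /eqP -> //|] := boolP (g \in map snd l1 ++ map snd l2).
by rewrite mem_cat negb_or => /andP[n1 n2]; rewrite !coefZ_out.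
Qed.

End IntegerCombinations.

Lemma ev_ofZ_map (T U : eqType) phi (f : T -> U) l :
  ev phi (ofZ [seq (p.1, f p.2) | p <- l]) = ev (phi \o f) (ofZ l).
Proof. by rewrite !ev_ofZ big_map. Qed.

Lemma ev_ofZ_mapN (T U : eqType) phi (f : T -> U) l :
  ev phi (ofZ [seq (- p.1, f p.2) | p <- l]) = - ev (phi \o f) (ofZ l).
Proof.
rewrite !ev_ofZ big_map -sumrN; apply: eq_bigr => p _.
by rewrite /= rmorphN mulNr.
Qed.

Lemma eqA_ev (x y : A) : (forall phi, ev phi x = ev phi y) -> eqA x y.
Proof. by move=> e g; have := e (fun t => (t == g)%:R); rewrite -!coefL_ev. Qed.

Lemma ev_mulA phi x y :
  ev phi (mulA x y) = ev (fun a => ev (fun b => phi (fmul a b)) y) x.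
Proof. exact: ev_allpairs. Qed.

Lemma ev_mulA_assoc phi x y z :
  ev phi (mulA (mulA x y) z) = ev phi (mulA x (mulA y z)).
Proof.
rewrite !ev_mulA; apply: eq_ev => a; rewrite ev_mulA.
by apply: eq_ev => b; apply: eq_ev => c; rewrite fmulA.
Qed.

Lemma ev_mul1A phi x : ev phi (mulA oneA x) = ev phi x.
Proof.
by rewrite ev_mulA ev_cons ev_nil addr0 mul1r; apply: eq_ev => g; rewrite fmul1g.
Qed.

Lemma ev_mulA1 phi x : ev phi (mulA x oneA) = ev phi x.
Proof.
by rewrite ev_mulA; apply: eq_ev => g; rewrite ev_cons ev_nil addr0 mul1r fmulg1.
Qed.

Lemma ev_mulA_subl x y z w :
  (forall psi, ev psi x = ev psi y - ev psi z) -> forall phi,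
  ev phi (mulA x w) = ev phi (mulA y w) - ev phi (mulA z w).
Proof. by move=> e phi; rewrite !ev_mulA e. Qed.

Lemma ev_mulA_subr x y z w :
  (forall psi, ev psi x = ev psi y - ev psi z) -> forall phi,
  ev phi (mulA w x) = ev phi (mulA w y) - ev phi (mulA w z).
Proof. by move=> e phi; rewrite !ev_mulA -ev_sub; apply: eq_ev => a; rewrite e. Qed.

Lemma ev_subA phi x y : ev phi (subA x y) = ev phi x - ev phi y.
Proof. by rewrite ev_cat /scaleA ev_scale mulN1r. Qed.

Lemma ev_mulAA (phi : FG * FG -> CC) s t :
  ev phi (mulAA s t) = ev (fun a => ev (fun b => phi (fmul a.1 b.1, fmul a.2 b.2)) t) s.
Proof. exact: (ev_allpairs _ (fun a b => (fmul a.1 b.1, fmul a.2 b.2))). Qed.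

Lemma ev_tens (phi : FG * FG -> CC) g h : ev phi (tens g h) = phi (g, h).
Proof. by rewrite ev_cons ev_nil addr0 mul1r. Qed.

Lemma ev_brK phi D x y :
  ev phi (brK D x y) =
  ev (fun a => ev (fun b => ev (fun w => phi (fmul w.1 w.2)) (D a b)) y) x.
Proof.
rewrite /ev big_flatten big_allpairs_dep; apply: eq_bigr => p _.
rewrite big_distrr; apply: eq_bigr => q _.
by rewrite [LHS](ev_scale phi) (ev_map phi (fun w => fmul w.1 w.2)) /= mulrA.
Qed.

(* [[a (x) Y]] = -(Y (x) 1) [[a (x) y]] (1 (x) Y) for Y = y^-1, from [[a (x) y Y]] = 0;
   symmetrically in the first argument. *)
Definition dbr_invr (Y : FG) (l : seq (int * (FG * FG))) :=
  [seq (- p.1, (fmul Y p.2.1, fmul p.2.2 Y)) | p <- l].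
Definition dbr_invl (X : FG) (l : seq (int * (FG * FG))) :=
  [seq (- p.1, (fmul p.2.1 X, fmul X p.2.2)) | p <- l].
Definition dbr_mulr (b c : FG) (l1 l2 : seq (int * (FG * FG))) :=
  [seq (p.1, (p.2.1, fmul p.2.2 c)) | p <- l1] ++
  [seq (p.1, (fmul b p.2.1, p.2.2)) | p <- l2].
Definition dbr_mull (a b : FG) (l1 l2 : seq (int * (FG * FG))) :=
  [seq (p.1, (fmul p.2.1 b, p.2.2)) | p <- l1] ++
  [seq (p.1, (p.2.1, fmul a p.2.2)) | p <- l2].

Definition dbr_gen (a b : bool) : seq (int * (FG * FG)) :=
  match a, b with
  | false, true => [:: (-1, (fmul fv fu, fone))]
  | true, false => [:: (1, (fmul fu fv, fone))]
  | _, _ => [::]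
  end.

Definition dbr_letters (x y : letter) : seq (int * (FG * FG)) :=
  let l := dbr_gen x.1 y.1 in
  let l := if x.2 then dbr_invl (fletter x) l else l in
  if y.2 then dbr_invr (fletter y) l else l.

Fixpoint dbr_letter_word (x : letter) (w : seq letter) : seq (int * (FG * FG)) :=
  if w is y :: t then
    dbr_mulr (fletter y) (FGred t) (dbr_letters x y) (dbr_letter_word x t)
  else [::].

Fixpoint dbr_words (w1 w2 : seq letter) : seq (int * (FG * FG)) :=
  if w1 is x :: t then
    dbr_mull (fletter x) (FGred t) (dbr_letter_word x w2) (dbr_words t w2)
  else [::].

Section DoubleBracket.
Variable D : FG -> FG -> AA.
Hypothesis HD : is_Kontsevich_dbr D.

Lemma ev_dbr_mulr psi a b c :
  ev psi (D a (fmul b c)) =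
  ev (fun w => psi (w.1, fmul w.2 c)) (D a b) + ev (fun w => psi (fmul b w.1, w.2)) (D a c).
Proof.
have [_ _ _ _ [Lr _]] := HD.
rewrite (ev_eq _ (Lr a b c)) ev_cat !ev_mulAA.
congr (_ + _); first by apply: eq_ev => w; rewrite ev_tens /= fmulg1.
by rewrite ev_tens; apply: eq_ev => w; rewrite /= fmul1g.
Qed.

Lemma ev_dbr_mull psi a b c :
  ev psi (D (fmul a b) c) =
  ev (fun w => psi (fmul w.1 b, w.2)) (D a c) + ev (fun w => psi (w.1, fmul a w.2)) (D b c).
Proof.
have [_ _ _ _ [_ Ll]] := HD.
rewrite (ev_eq _ (Ll a b c)) ev_cat !ev_mulAA.
congr (_ + _); first by apply: eq_ev => w; rewrite ev_tens /= fmulg1.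
by rewrite ev_tens; apply: eq_ev => w; rewrite /= fmul1g.
Qed.

Lemma ev_dbr1r psi a : ev psi (D a fone) = 0.
Proof.
have := ev_dbr_mulr psi a fone fone; rewrite fmul1g.
have E1 : ev (fun w => psi (w.1, fmul w.2 fone)) (D a fone) = ev psi (D a fone).
  by apply: eq_ev => w; rewrite fmulg1 -surjective_pairing.
have E2 : ev (fun w => psi (fmul fone w.1, w.2)) (D a fone) = ev psi (D a fone).
  by apply: eq_ev => w; rewrite fmul1g -surjective_pairing.
by rewrite E1 E2 -{1}[ev psi _]addr0 => /addrI <-.
Qed.

Lemma ev_dbr1l psi c : ev psi (D fone c) = 0.
Proof.
have := ev_dbr_mull psi fone fone c; rewrite fmul1g.
have E1 : ev (fun w => psi (fmul w.1 fone, w.2)) (D fone c) = ev psi (D fone c).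
  by apply: eq_ev => w; rewrite fmulg1 -surjective_pairing.
have E2 : ev (fun w => psi (w.1, fmul fone w.2)) (D fone c) = ev psi (D fone c).
  by apply: eq_ev => w; rewrite fmul1g -surjective_pairing.
by rewrite E1 E2 -{1}[ev psi _]addr0 => /addrI <-.
Qed.

Lemma ev_brK1r phi x : ev phi (brK D x oneA) = 0.
Proof.
rewrite ev_brK; apply: big1 => p _.
by rewrite ev_cons ev_nil ev_dbr1r mulr0 add0r mulr0.
Qed.

Lemma ev_brK_mulr phi x y z :
  ev phi (brK D x (mulA y z)) =
  ev phi (mulA (brK D x y) z) + ev phi (mulA y (brK D x z)).
Proof.
rewrite ev_brK !ev_mulA ev_brK.
under eq_ev => a do rewrite ev_mulA.
under eq_ev => a do under eq_ev => b do under eq_ev => c do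
  rewrite (ev_dbr_mulr (fun w => phi (fmul w.1 w.2))).
under eq_ev => a do under eq_ev => b do rewrite ev_add.
under eq_ev => a do rewrite ev_add.
rewrite ev_add; congr (_ + _).
- apply: eq_ev => a; apply: eq_ev => b; rewrite ev_swap.
  by apply: eq_ev => w; apply: eq_ev => c; rewrite /= fmulA.
- rewrite ev_swap; apply: eq_ev => b; rewrite ev_brK.
  by apply: eq_ev => a; apply: eq_ev => c; apply: eq_ev => w; rewrite /= fmulA.
Qed.


Definition dbr_eq (a b : FG) (l : seq (int * (FG * FG))) :=
  forall psi, ev psi (D a b) = ev psi (ofZ l).

Lemma dbr_eq1r a : dbr_eq a fone [::].
Proof. by move=> psi; rewrite ev_dbr1r ev_ofZ big_nil. Qed.

Lemma dbr_eq1l c : dbr_eq fone c [::].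
Proof. by move=> psi; rewrite ev_dbr1l ev_ofZ big_nil. Qed.

Lemma dbr_eq_invr a y Y l : fmul Y y = fone -> fmul y Y = fone ->
  dbr_eq a y l -> dbr_eq a Y (dbr_invr Y l).
Proof.
move=> Yy yY H psi.
have := ev_dbr_mulr (fun w => psi (fmul Y w.1, w.2)) a y Y; rewrite yY ev_dbr1r.
have -> : ev (fun w => psi (fmul Y (fmul y w.1), w.2)) (D a Y) = ev psi (D a Y).
  by apply: eq_ev => w; rewrite fmulA Yy fmul1g -surjective_pairing.
rewrite (ev_ofZ_mapN _ (fun t => (fmul Y t.1, fmul t.2 Y))) -H.
by move/eqP; rewrite eq_sym addrC addr_eq0 => /eqP ->.
Qed.

Lemma dbr_eq_invl x X c l : fmul X x = fone -> fmul x X = fone ->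
  dbr_eq x c l -> dbr_eq X c (dbr_invl X l).
Proof.
move=> Xx xX H psi.
have := ev_dbr_mull (fun w => psi (w.1, fmul X w.2)) x X c; rewrite xX ev_dbr1l.
have -> : ev (fun w => psi (w.1, fmul X (fmul x w.2))) (D X c) = ev psi (D X c).
  by apply: eq_ev => w; rewrite fmulA Xx fmul1g -surjective_pairing.
rewrite (ev_ofZ_mapN _ (fun t => (fmul t.1 X, fmul X t.2))) -H.
by move/eqP; rewrite eq_sym addrC addr_eq0 => /eqP ->.
Qed.

Lemma dbr_eq_mulr a b c l1 l2 : dbr_eq a b l1 -> dbr_eq a c l2 ->
  dbr_eq a (fmul b c) (dbr_mulr b c l1 l2).
Proof.
move=> H1 H2 psi; rewrite ev_dbr_mulr H1 H2 ev_ofZ_cat.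
rewrite (ev_ofZ_map _ (fun t => (t.1, fmul t.2 c))).
by rewrite (ev_ofZ_map _ (fun t => (fmul b t.1, t.2))).
Qed.

Lemma dbr_eq_mull a b c l1 l2 : dbr_eq a c l1 -> dbr_eq b c l2 ->
  dbr_eq (fmul a b) c (dbr_mull a b l1 l2).
Proof.
move=> H1 H2 psi; rewrite ev_dbr_mull H1 H2 ev_ofZ_cat.
rewrite (ev_ofZ_map _ (fun t => (fmul t.1 b, t.2))).
by rewrite (ev_ofZ_map _ (fun t => (t.1, fmul a t.2))).
Qed.

Lemma dbr_eq_gen a b : dbr_eq (fletter (a, false)) (fletter (b, false)) (dbr_gen a b).
Proof.
have [Huv Hvu Huu Hvv _] := HD.
case: a; case: b => psi;
  rewrite ?(ev_eq _ Huv) ?(ev_eq _ Hvu) ?(ev_eq _ Huu) ?(ev_eq _ Hvv) //.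
by rewrite /scaleAA ev_scale ev_tens ev_ofZ big_cons big_nil addr0 mulrN1z.
Qed.

Lemma dbr_eq_letters x y : dbr_eq (fletter x) (fletter y) (dbr_letters x y).
Proof.
have invr a b l : dbr_eq a (fletter (b, false)) l ->
    dbr_eq a (fletter (b, true)) (dbr_invr (fletter (b, true)) l).
  exact: dbr_eq_invr (fletter_linv (b, true)) (fletter_linv (b, false)).
have invl a b l : dbr_eq (fletter (a, false)) b l ->
    dbr_eq (fletter (a, true)) b (dbr_invl (fletter (a, true)) l).
  exact: dbr_eq_invl (fletter_linv (a, true)) (fletter_linv (a, false)).
case: x y => [a []] [b []]; rewrite /dbr_letters /=;
  do ?[apply: invr | apply: invl]; exact: dbr_eq_gen.
Qed.

Lemma dbr_eq_letter_word x w : dbr_eq (fletter x) (FGred w) (dbr_letter_word x w).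
Proof.
elim: w => [|y t IH]; first exact: dbr_eq1r.
by rewrite FGred_cons; apply: dbr_eq_mulr (dbr_eq_letters x y) IH.
Qed.

Lemma dbr_eq_words w1 w2 : dbr_eq (FGred w1) (FGred w2) (dbr_words w1 w2).
Proof.
elim: w1 => [|x t IH]; first exact: dbr_eq1l.
by rewrite FGred_cons; apply: dbr_eq_mull (dbr_eq_letter_word x w2) IH.
Qed.

End DoubleBracket.

Definition hwords : seq (seq letter) :=
  [:: [:: (false, false)]; [:: (true, false)]; [:: (false, true)]; [:: (true, true)];
      [:: (false, true); (true, true)]].

Definition sK : A := [:: (1, fv); (1, finv fu)].

Definition swords : seq (seq letter) := [:: [:: (true, false)]; [:: (false, true)]].

Lemma ev_hK psi : ev psi hK = \sum_(w <- hwords) psi (FGred w).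
Proof.
rewrite /hK.
have -> : finv fu = FGred [:: (false, true)] by apply: val_inj.
have -> : finv fv = FGred [:: (true, true)] by apply: val_inj.
have -> : fmul (FGred [:: (false, true)]) (FGred [:: (true, true)]) =
          FGred [:: (false, true); (true, true)] by apply: val_inj.
by rewrite /ev !big_cons !big_nil !mul1r.
Qed.

Lemma ev_sK psi : ev psi sK = \sum_(s <- swords) psi (FGred s).
Proof.
rewrite /sK.
have -> : finv fu = FGred [:: (false, true)] by apply: val_inj.
by rewrite /ev !big_cons !big_nil !mul1r.
Qed.

Definition muZ (l : seq (int * (FG * FG))) : seq (int * FG) :=
  [seq (p.1, fmul p.2.1 p.2.2) | p <- l].

Definition bracket_hh : seq (int * FG) :=
  flatten [seq muZ (dbr_words w1 w2) | w1 <- hwords, w2 <- hwords].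

Definition commutator_hs : seq (int * FG) :=
  [seq (1%Z, FGred (w ++ s)) | w <- hwords, s <- swords] ++
  [seq ((-1)%Z, FGred (s ++ w)) | s <- swords, w <- hwords].

Lemma bracket_hh_commutator : eqZb bracket_hh commutator_hs.
Proof. by vm_compute. Qed.

Lemma ev_brK_hK_hK D : is_Kontsevich_dbr D -> forall phi,
  ev phi (brK D hK hK) = ev phi (mulA hK sK) - ev phi (mulA sK hK).
Proof.
move=> HD phi; rewrite ev_brK ev_hK.
under eq_bigr => w1 _ do rewrite ev_hK.
transitivity (ev phi (ofZ bracket_hh)).
  rewrite ev_ofZ_flatten big_allpairs_dep; apply: eq_bigr => w1 _; apply: eq_bigr => w2 _.
  by rewrite (ev_ofZ_map _ (fun t => fmul t.1 t.2)) (dbr_eq_words HD).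
rewrite (eqZbP bracket_hh_commutator) ev_ofZ_cat !ev_ofZ_allpairs !ev_mulA ev_hK ev_sK.
under [X in _ = _ - X]eq_bigr => s _ do rewrite ev_hK.
under [X in _ = X - _]eq_bigr => w _ do rewrite ev_sK.
congr (_ + _).
  by apply: eq_bigr => w _; apply: eq_bigr => s _; rewrite FGred_cat mul1r.
rewrite -sumrN; apply: eq_bigr => s _; rewrite -sumrN; apply: eq_bigr => w _.
by rewrite FGred_cat mulrN1z mulN1r.
Qed.

Lemma ev_brK_hK_pow D k : is_Kontsevich_dbr D -> forall phi,
  ev phi (brK D hK (powA hK k)) =
  ev phi (mulA (powA hK k) sK) - ev phi (mulA sK (powA hK k)).
Proof.
move=> HD; elim: k => [|k IH] phi.
  by rewrite (ev_brK1r HD) [powA _ 0]/= ev_mulA1 subrr.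
rewrite [powA hK k.+1]/= (ev_brK_mulr HD) (ev_mulA_subl _ (ev_brK_hK_hK HD)).
rewrite (ev_mulA_subr _ IH) !ev_mulA_assoc.
by rewrite addrC addrA subrK.
Qed.

Unset Implicit Arguments.

Theorem mainTheorem3 (D : FG -> FG -> AA) :
  is_Kontsevich_dbr D ->
  forall k : nat, (0 < k)%N -> in_commA (brK D hK (powA hK k)).
Proof.
move=> HD k _; exists [:: (1, powA hK k, sK)]; apply: eqA_ev => phi.
by rewrite (ev_brK_hK_pow _ HD) /= cats0 ev_scale mul1r ev_subA.
Qed.
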